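(* Let $A$ be an algebra whose commutator is commutative and distributive w.r.t. arbitrary joins and such that $[\theta,\nabla_A]_A=\theta$ for all $\theta\in\mathrm{Con}(A)$. Then $A$ is a Baer algebra if and only if $\theta^\perp\in\mathcal B(\mathrm{Con}(A))$ for every $\theta\in\mathcal K(A)$.
   Context: Let $A$ be an algebra of a fixed signature. $\mathrm{Con}(A)$ is the complete lattice of congruences of $A$, with bottom $\Delta_A$ and top $\nabla_A=A^2$; $\mathrm{PCon}(A)$ is the set of principal congruences and $\mathcal K(A)$ the set of finitely generated (compact) congruences of $A$. $[\cdot,\cdot]_A$ is the term condition commutator: for $\alpha,\beta,\mu\in\mathrm{Con}(A)$, $C(\alpha,\beta;\mu)$ means that for all $n,k$, every $(n+k)$-ary term $t$, all $(a_i,b_i)\in\alpha$ and $(c_j,d_j)\in\beta$: $(t(\bar a,\bar c),t(\bar a,\bar d))\in\mu$ iff $(t(\bar b,\bar c),t(\bar b,\bar d))\in\mu$; $[\alpha,\beta]_A=\bigcap\{\mu: C(\alpha,\beta;\mu)\}$. ''The commutator of $A$ is commutative and distributive w.r.t. arbitrary joins'' means $[\alpha,\beta]_A=[\beta,\alpha]_A$ and $[\bigvee_{i}\alpha_i,\beta]_A=\bigvee_{i}[\alpha_i,\beta]_A$ for all families. For $\beta\in\mathrm{Con}(A)$, $\beta^\perp=\bigvee\{\alpha\in\mathrm{Con}(A):[\alpha,\beta]_A=\Delta_A\}$. $\mathcal B(\mathrm{Con}(A))$ is the set of complemented elements of the lattice $\mathrm{Con}(A)$. $A$ is a Baer algebra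 iff $\theta^\perp\in\mathcal B(\mathrm{Con}(A))$ for all $\theta\in\mathrm{PCon}(A)$. *)

From Stdlib Require Import List Fin.

Set Implicit Arguments.

Record signature := Signature { op_sym : Type ; arity : op_sym -> nat }.

Record algebra (S : signature) := Algebra {
  carrier :> Type ;
  ops : forall f : op_sym S, (Fin.t (arity S f) -> carrier) -> carrier }.

Definition rel (T : Type) := T -> T -> Prop.

Section UA.
Context {S : signature} (A : algebra S).

Inductive term (V : Type) : Type :=
| Var : V -> term V
| App : forall f : op_sym S, (Fin.t (arity S f) -> term V) -> term V.

Fixpoint eval {V : Type} (v : V -> A) (t : term V) : A :=
  match t with
  | Var x => v x
  | App f ts => ops A f (fun i => eval v (ts i))
  end.

Definition releq (R R' : rel A) : Prop := forall x y, R x y <-> R' x y.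

Definition is_con (R : rel A) : Prop :=
  (forall x, R x x) /\ (forall x y, R x y -> R y x) /\
  (forall x y z, R x y -> R y z -> R x z) /\
  (forall (f : op_sym S) (u w : Fin.t (arity S f) -> A),
      (forall i, R (u i) (w i)) -> R (ops A f u) (ops A f w)).

Definition Delta : rel A := fun x y => x = y.
Definition Nabla : rel A := fun _ _ => True.

Definition Cg (R : rel A) : rel A :=
  fun x y => forall th, is_con th -> (forall u w, R u w -> th u w) -> th x y.

Definition joinF {I : Type} (al : I -> rel A) : rel A :=
  Cg (fun x y => exists i, al i x y).

Definition join2 (a b : rel A) : rel A := Cg (fun x y => a x y \/ b x y).
Definition meet2 (a b : rel A) : rel A := fun x y => a x y /\ b x y.

Definition TC (al be mu : rel A) : Prop :=
  forall (n k : nat) (t : term (Fin.t n + Fin.t k))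
         (a b : Fin.t n -> A) (c d : Fin.t k -> A),
    (forall i, al (a i) (b i)) -> (forall j, be (c j) (d j)) ->
    let ev (p : Fin.t n -> A) (q : Fin.t k -> A) :=
        eval (fun v => match v with inl i => p i | inr j => q j end) t in
    (mu (ev a c) (ev a d) <-> mu (ev b c) (ev b d)).

Definition comm (al be : rel A) : rel A :=
  fun x y => forall mu, is_con mu -> TC al be mu -> mu x y.

Definition perp (be : rel A) : rel A :=
  @joinF {al : rel A | is_con al /\ releq (comm al be) Delta} (@proj1_sig _ _).

Definition complemented (th : rel A) : Prop :=
  exists th', is_con th' /\ releq (meet2 th th') Delta /\ releq (join2 th th') Nabla.

Definition is_PCon (th : rel A) : Prop :=
  exists a b : A, releq th (Cg (fun x y => x = a /\ y = b)).

Definition is_KCon (th : rel A) : Prop :=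
  exists l : list (A * A), releq th (Cg (fun x y => In (x, y) l)).

Definition Baer : Prop := forall th, is_PCon th -> complemented (perp th).

Definition comm_commutative : Prop :=
  forall al be, is_con al -> is_con be -> releq (comm al be) (comm be al).

Definition comm_join_distributive : Prop :=
  forall (I : Type) (al : I -> rel A) (be : rel A),
    (forall i, is_con (al i)) -> is_con be ->
    releq (comm (joinF al) be) (joinF (fun i => comm (al i) be)).

End UA.

(* Principal congruences are compact, so one direction is immediate.  For the
   other, a compact congruence Cg{(a1,b1),...,(an,bn)} is the finite join of
   the principal congruences Cg(ai,bi), and we argue by induction on n using
   two facts, both consequences of the commutator hypotheses:
   - (θ1 ∨ θ2)^⊥ = θ1^⊥ ∧ θ2^⊥, because the commutator distributes over
     joins and β^⊥ is the largest α with [α,β] = Δ;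
   - the meet of two complemented congruences α, β (with complements α', β')
     is complemented, with complement α' ∨ β'.  This rests on the absorption
     law α = [α,∇] ≤ [α,β] ∨ [α,γ] whenever β ∨ γ = ∇.
   The base case is Cg ∅ = Δ, whose annihilator ∇ is complemented by Δ. *)

From Stdlib Require Import List Fin.
From Stdlib Require Import FunctionalExtensionality PropExtensionality.

Section Congruences.
Context {S : signature} (A : algebra S).

Definition incl (R R' : rel A) : Prop := forall x y, R x y -> R' x y.

(* Relations are compared extensionally; we use extensionality to turn
   mutual inclusion into equality, so that rewriting is available. *)
Lemma incl_antisym (R R' : rel A) : incl R R' -> incl R' R -> R = R'.
Proof.
  intros H1 H2. apply functional_extensionality; intro x.
  apply functional_extensionality; intro y.
  apply propositional_extensionality; split; auto.
Qed.

Lemma incl_refl (R : rel A) : incl R R.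
Proof. intros x y H; exact H. Qed.

Lemma incl_trans (R1 R2 R3 : rel A) : incl R1 R2 -> incl R2 R3 -> incl R1 R3.
Proof. intros H1 H2 x y H. apply H2, H1, H. Qed.

Lemma releq_incl (R R' : rel A) : releq A R R' -> incl R R'.
Proof. intros H x y. apply H. Qed.

Lemma releq_eq (R R' : rel A) : releq A R R' -> R = R'.
Proof. intro H. apply incl_antisym; intros x y; apply H. Qed.

Lemma Cg_con (R : rel A) : is_con A (Cg A R).
Proof.
  unfold Cg; repeat split.
  - intros x th (Hr & _) _. apply Hr.
  - intros x y H th Hth HR. pose proof Hth as (_ & Hs & _). apply Hs, H; auto.
  - intros x y z H1 H2 th Hth HR. pose proof Hth as (_ & _ & Ht & _).
    apply Ht with y; [apply H1 | apply H2]; assumption.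
  - intros f u w H th Hth HR. pose proof Hth as (_ & _ & _ & Hc).
    apply Hc. intro i. apply H; auto.
Qed.

Lemma Cg_incl (R : rel A) : incl R (Cg A R).
Proof. intros x y H th _ HR. apply HR, H. Qed.

Lemma Cg_least (R th : rel A) : is_con A th -> incl R th -> incl (Cg A R) th.
Proof. intros Hth HR x y H. apply H; auto. Qed.

Lemma Cg_ext (R R' : rel A) : (forall x y, R x y <-> R' x y) -> Cg A R = Cg A R'.
Proof.
  intro H. apply incl_antisym; apply Cg_least; try apply Cg_con;
    intros x y Hxy; apply Cg_incl, H; exact Hxy.
Qed.

Lemma con_Delta : is_con A (Delta A).
Proof.
  unfold Delta; repeat split; intros; subst; auto.
  apply f_equal. apply functional_extensionality; auto.
Qed.

Lemma con_Nabla : is_con A (Nabla A).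
Proof. unfold Nabla; repeat split; auto. Qed.

Lemma con_meet2 (a b : rel A) : is_con A a -> is_con A b -> is_con A (meet2 A a b).
Proof.
  intros (ra & sa & ta & ca) (rb & sb & tb & cb). unfold meet2.
  repeat split.
  - apply ra.
  - apply rb.
  - apply sa; tauto.
  - apply sb; tauto.
  - apply ta with y; tauto.
  - apply tb with y; tauto.
  - apply ca. intro i. apply H.
  - apply cb. intro i. apply H.
Qed.

Lemma join2_l (a b : rel A) : incl a (join2 A a b).
Proof. intros x y H. apply Cg_incl. left; exact H. Qed.

Lemma join2_r (a b : rel A) : incl b (join2 A a b).
Proof. intros x y H. apply Cg_incl. right; exact H. Qed.

Lemma join2_least (a b c : rel A) :
  is_con A c -> incl a c -> incl b c -> incl (join2 A a b) c.
Proof. intros Hc Ha Hb. apply Cg_least; auto. intros x y [H | H]; auto. Qed.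

Lemma join2_as_joinF (a b : rel A) :
  join2 A a b = joinF A (fun i : bool => if i then a else b).
Proof.
  apply Cg_ext. intros x y; split.
  - intros [H | H]; [exists true | exists false]; exact H.
  - intros [[|] H]; [left | right]; exact H.
Qed.

Lemma eval_compat (th : rel A) : is_con A th ->
  forall V (v w : V -> A), (forall x, th (v x) (w x)) ->
  forall t, th (eval A v t) (eval A w t).
Proof.
  intros Hth V v w H t. induction t as [x | f ts IH]; simpl.
  - apply H.
  - destruct Hth as (_ & _ & _ & Hc). apply Hc, IH.
Qed.

Lemma TC_left (al be : rel A) : is_con A al -> TC A al be al.
Proof.
  intros Hal n k t a b c d Hab Hcd ev.
  assert (Hev : forall q, al (ev a q) (ev b q)).
  { intro q. apply eval_compat; auto. intros [i | j]; auto. apply (proj1 Hal). }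
  destruct Hal as (_ & Hs & Ht & _).
  split; intro H.
  - apply Ht with (ev a c); [apply Hs, Hev |]. apply Ht with (ev a d); auto.
  - apply Ht with (ev b c); [apply Hev |]. apply Ht with (ev b d); auto.
Qed.

Lemma TC_right (al be : rel A) : is_con A be -> TC A al be be.
Proof.
  intros Hbe n k t a b c d Hab Hcd ev.
  assert (Hev : forall p, be (ev p c) (ev p d)).
  { intro p. apply eval_compat; auto. intros [i | j]; auto. apply (proj1 Hbe). }
  split; auto.
Qed.

Lemma comm_le_meet (al be : rel A) : is_con A al -> is_con A be ->
  incl (comm A al be) (meet2 A al be).
Proof.
  intros Hal Hbe x y H. split.
  - apply H; auto using TC_left.
  - apply H; auto using TC_right.
Qed.

Lemma comm_mono (al al' be be' : rel A) : incl al al' -> incl be be' ->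
  incl (comm A al be) (comm A al' be').
Proof.
  intros H1 H2 x y Hc mu Hmu HT. apply Hc; auto.
  intros n k t a b c d Hab Hcd. apply HT; auto.
Qed.

Lemma comm_refl (al be : rel A) (x : A) : comm A al be x x.
Proof. intros mu Hmu _. apply (proj1 Hmu). Qed.

Lemma complemented_intro (th th' : rel A) : is_con A th -> is_con A th' ->
  incl (meet2 A th th') (Delta A) -> incl (Nabla A) (join2 A th th') ->
  complemented A th.
Proof.
  intros Hth Hth' HD HN. exists th'.
  split; [exact Hth' | split]; intros x y; split.
  - apply HD.
  - intro e. unfold Delta in e. subst y. split; [apply (proj1 Hth) | apply (proj1 Hth')].
  - intros _. exact I.
  - intros _. apply HN. exact I.
Qed.

Lemma complemented_elim (th : rel A) : complemented A th ->
  exists th', is_con A th' /\ incl (meet2 A th th') (Delta A) /\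
              incl (Nabla A) (join2 A th th').
Proof.
  intros [th' [Hth' [HD HN]]]. exists th'.
  split; [exact Hth' | split]; intros x y H; [apply HD | apply HN]; exact H.
Qed.

Lemma Cg_cons (a b : A) (l : list (A * A)) :
  Cg A (fun x y => In (x, y) ((a, b) :: l)) =
  join2 A (Cg A (fun x y => x = a /\ y = b)) (Cg A (fun x y => In (x, y) l)).
Proof.
  apply incl_antisym.
  - apply Cg_least; [apply Cg_con |]. intros u w [H | H].
    + inversion H; subst. apply join2_l, Cg_incl. auto.
    + apply join2_r, Cg_incl, H.
  - apply join2_least; [apply Cg_con | |]; apply Cg_least; try apply Cg_con;
      intros u w H; apply Cg_incl.
    + destruct H; subst; left; reflexivity.
    + right; exact H.
Qed.

Lemma PCon_is_KCon (th : rel A) : is_PCon A th -> is_KCon A th.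
Proof.
  intros [a [b Hab]]. exists ((a, b) :: nil). intros x y.
  rewrite (Hab x y). rewrite (Cg_ext (fun x y => x = a /\ y = b)
    (fun x y => In (x, y) ((a, b) :: nil))); [tauto |].
  intros u w; simpl; split.
  - intros [-> ->]; left; reflexivity.
  - intros [H | []]; inversion H; auto.
Qed.

End Congruences.

Section CommutatorAlgebra.
Context {S : signature} (A : algebra S)
  (Hcomm : comm_commutative A)
  (Hdist : comm_join_distributive A).

Lemma comm_join2_left (a b c : rel A) : is_con A a -> is_con A b -> is_con A c ->
  incl A (comm A (join2 A a b) c) (join2 A (comm A a c) (comm A b c)).
Proof.
  intros Ha Hb Hc. rewrite !join2_as_joinF.
  apply (incl_trans A _ (joinF A (fun i : bool => comm A (if i then a else b) c))).
  - apply releq_incl, Hdist; [intros [|] |]; assumption.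
  - apply (Cg_least A); [apply Cg_con |]. intros u w [[|] Hi]; apply (Cg_incl A).
    + exists true; exact Hi.
    + exists false; exact Hi.
Qed.

Lemma comm_join2_right (a b c : rel A) : is_con A a -> is_con A b -> is_con A c ->
  incl A (comm A c (join2 A a b)) (join2 A (comm A c a) (comm A c b)).
Proof.
  intros Ha Hb Hc.
  apply (incl_trans A _ (comm A (join2 A a b) c)); [apply releq_incl, Hcomm, Cg_con; auto |].
  apply (incl_trans A _ (join2 A (comm A a c) (comm A b c))); [apply comm_join2_left; auto |].
  apply (join2_least A); [apply Cg_con | |].
  - apply (incl_trans A _ _ _ (releq_incl A _ _ (Hcomm a c Ha Hc)) (join2_l A _ _)).
  - apply (incl_trans A _ _ _ (releq_incl A _ _ (Hcomm b c Hb Hc)) (join2_r A _ _)).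
Qed.

Lemma perp_con (be : rel A) : is_con A (perp A be).
Proof. apply Cg_con. Qed.

Lemma perp_greatest (al be : rel A) : is_con A al ->
  incl A (comm A al be) (Delta A) -> incl A al (perp A be).
Proof.
  intros Hal Hs x y H. apply (Cg_incl A).
  assert (Hr : releq A (comm A al be) (Delta A)).
  { intros u w; split; [apply Hs | intro e; unfold Delta in e; subst; apply comm_refl]. }
  exists (exist _ al (conj Hal Hr)). exact H.
Qed.

Lemma perp_annihilates (be : rel A) : is_con A be ->
  incl A (comm A (perp A be) be) (Delta A).
Proof.
  intros Hbe.
  assert (Hcons : forall i : {al : rel A | is_con A al /\ releq A (comm A al be) (Delta A)},
            is_con A (proj1_sig i)) by (intro i; exact (proj1 (proj2_sig i))).
  apply (incl_trans A _ _ _ (releq_incl A _ _ (Hdist _ _ be Hcons Hbe))).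
  apply (Cg_least A); [apply con_Delta |].
  intros u w [[al [Hal Heq]] Hi]. exact (proj1 (Heq u w) Hi).
Qed.

Lemma perp_antitone (th be : rel A) : is_con A th -> is_con A be ->
  incl A th be -> incl A (perp A be) (perp A th).
Proof.
  intros Hth Hbe Hle. apply perp_greatest; [apply perp_con |].
  apply (incl_trans A _ (comm A (perp A be) be)); [| apply perp_annihilates; exact Hbe].
  apply comm_mono; [apply incl_refl | exact Hle].
Qed.

Lemma perp_join2 (th1 th2 : rel A) : is_con A th1 -> is_con A th2 ->
  perp A (join2 A th1 th2) = meet2 A (perp A th1) (perp A th2).
Proof.
  intros H1 H2.
  assert (HJ : is_con A (join2 A th1 th2)) by apply Cg_con.
  assert (HM : is_con A (meet2 A (perp A th1) (perp A th2)))
    by (apply con_meet2; apply perp_con).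
  apply incl_antisym.
  - intros x y H. split.
    + apply (perp_antitone th1 _ H1 HJ (join2_l A _ _)), H.
    + apply (perp_antitone th2 _ H2 HJ (join2_r A _ _)), H.
  - apply perp_greatest; [exact HM |].
    apply (incl_trans A _ _ _ (comm_join2_right th1 th2 _ H1 H2 HM)).
    apply (join2_least A); [apply con_Delta | |].
    + apply (incl_trans A _ (comm A (perp A th1) th1)); [| apply perp_annihilates; exact H1].
      apply comm_mono; [intros p q Hp; exact (proj1 Hp) | apply incl_refl].
    + apply (incl_trans A _ (comm A (perp A th2) th2)); [| apply perp_annihilates; exact H2].
      apply comm_mono; [intros p q Hp; exact (proj2 Hp) | apply incl_refl].
Qed.

Lemma perp_of_trivial_complemented (th : rel A) : is_con A th ->
  incl A th (Delta A) -> complemented A (perp A th).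
Proof.
  intros Hth Htriv. apply (complemented_intro A _ (Delta A)); [apply perp_con | apply con_Delta | |].
  - intros x y [_ H]; exact H.
  - apply (incl_trans A _ (perp A th)); [| apply join2_l].
    apply perp_greatest; [apply con_Nabla |].
    apply (incl_trans A _ (meet2 A (Nabla A) th)); [apply comm_le_meet; auto using con_Nabla |].
    intros x y [_ H]. apply Htriv, H.
Qed.

Hypothesis Hnabla : forall th, is_con A th -> releq A (comm A th (Nabla A)) th.

(* Absorption: if β ∨ γ = ∇ then α = [α,∇] ≤ [α,β] ∨ [α,γ]. *)
Lemma comm_absorb (al be ga : rel A) : is_con A al -> is_con A be -> is_con A ga ->
  incl A (Nabla A) (join2 A be ga) ->
  incl A al (join2 A (comm A al be) (comm A al ga)).
Proof.
  intros Hal Hbe Hga Hcover.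
  apply (incl_trans A _ (comm A al (Nabla A))); [intros x y H; apply (Hnabla al Hal x y), H |].
  apply (incl_trans A _ (comm A al (join2 A be ga))); [apply comm_mono; [apply incl_refl | exact Hcover] |].
  apply comm_join2_right; assumption.
Qed.

Lemma complemented_meet2 (a b : rel A) : is_con A a -> is_con A b ->
  complemented A a -> complemented A b -> complemented A (meet2 A a b).
Proof.
  intros Ha Hb Ca Cb.
  destruct (complemented_elim A a Ca) as [a' [Ha' [Da Na]]].
  destruct (complemented_elim A b Cb) as [b' [Hb' [Db Nb]]].
  set (c := meet2 A a b). set (c' := join2 A a' b').
  assert (Hc : is_con A c) by (apply con_meet2; assumption).
  assert (Hc' : is_con A c') by apply Cg_con.
  (* [α' ∨ β', α ∧ β] ≤ [α',α] ∨ [β',β] = Δ *)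
  assert (Hannih : incl A (comm A c' c) (Delta A)).
  { apply (incl_trans A _ _ _ (comm_join2_left a' b' c Ha' Hb' Hc)).
    apply (join2_least A); [apply con_Delta | |].
    - apply (incl_trans A _ (comm A a' a)); [apply comm_mono; [apply incl_refl | intros x y H; exact (proj1 H)] |].
      apply (incl_trans A _ _ _ (comm_le_meet A a' a Ha' Ha)).
      intros x y [H1 H2]. apply Da. split; assumption.
    - apply (incl_trans A _ (comm A b' b)); [apply comm_mono; [apply incl_refl | intros x y H; exact (proj2 H)] |].
      apply (incl_trans A _ _ _ (comm_le_meet A b' b Hb' Hb)).
      intros x y [H1 H2]. apply Db. split; assumption. }
  (* ∇ = α ∨ α', and α ≤ [α,β] ∨ [α,β'] ≤ (α ∧ β) ∨ β' *)
  assert (Hcover : incl A (Nabla A) (join2 A c c')).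
  { apply (incl_trans A _ _ _ Na). apply (join2_least A); [apply Cg_con | |].
    - apply (incl_trans A _ _ _ (comm_absorb a b b' Ha Hb Hb' Nb)).
      apply (join2_least A); [apply Cg_con | |].
      + apply (incl_trans A _ c); [apply comm_le_meet; assumption | apply join2_l].
      + apply (incl_trans A _ c'); [| apply join2_r].
        apply (incl_trans A _ b'); [| apply join2_r].
        apply (incl_trans A _ _ _ (comm_le_meet A a b' Ha Hb')). intros x y H; exact (proj2 H).
    - apply (incl_trans A _ c'); [apply join2_l | apply join2_r]. }
  (* δ := c ∧ c' satisfies δ ≤ [δ,c] ∨ [δ,c'] ≤ [c',c] ∨ [c,c'] = Δ *)
  assert (Hdisj : incl A (meet2 A c c') (Delta A)).
  { apply (incl_trans A _ _ _ (comm_absorb _ c c' (con_meet2 A c c' Hc Hc') Hc Hc' Hcover)).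
    apply (join2_least A); [apply con_Delta | |].
    - apply (incl_trans A _ (comm A c' c)); [| exact Hannih].
      apply comm_mono; [intros x y H; exact (proj2 H) | apply incl_refl].
    - apply (incl_trans A _ (comm A c c')); [apply comm_mono; [intros x y H; exact (proj1 H) | apply incl_refl] |].
      apply (incl_trans A _ _ _ (releq_incl A _ _ (Hcomm c c' Hc Hc'))). exact Hannih. }
  exact (complemented_intro A c c' Hc Hc' Hdisj Hcover).
Qed.

Lemma Baer_perp_compact (HB : Baer A) (l : list (A * A)) :
  complemented A (perp A (Cg A (fun x y => In (x, y) l))).
Proof.
  induction l as [| [a b] l IH].
  - apply perp_of_trivial_complemented; [apply Cg_con |].
    apply (Cg_least A); [apply con_Delta | intros u w []].
  - rewrite Cg_cons, perp_join2 by apply Cg_con.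
    apply complemented_meet2; try apply perp_con; [| exact IH].
    apply HB. exists a, b. intros x y; tauto.
Qed.

End CommutatorAlgebra.

Theorem mainTheorem5 (S : signature) (A : algebra S)
  (Hcomm : comm_commutative A)
  (Hdist : comm_join_distributive A)
  (Hnabla : forall th, is_con A th -> releq A (comm A th (Nabla A)) th) :
  Baer A <-> (forall th, is_KCon A th -> complemented A (perp A th)).
Proof.
  split.
  - intros HB th [l Hl]. rewrite (releq_eq A _ _ Hl).
    exact (Baer_perp_compact A Hcomm Hdist Hnabla HB l).
  - intros HK th Hth. apply HK, PCon_is_KCon, Hth.
Qed.
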